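(* Let $k\geq 1$ be an integer and let $G$ be a graph of order $n$. If \[ \mu(G)>\frac{k-1}{2}+\sqrt{kn+\frac{(k+1)^2}{4}}, \] then $G$ contains $C_{2k+1}$ or $C_{2k+2}$ as a subgraph.
   Context: All graphs are finite and simple. $\mu(G)$ denotes the largest eigenvalue of the adjacency matrix of $G$. $C_r$ denotes the cycle on $r$ vertices. *)

From HB Require Import structures.
From mathcomp Require Import all_boot all_order all_algebra.
From mathcomp Require Import all_reals.
Set Implicit Arguments. Unset Strict Implicit. Unset Printing Implicit Defensive.
Import Order.TTheory GRing.Theory Num.Theory.
Local Open Scope ring_scope.

Definition simple_graph (n : nat) (e : rel 'I_n) : Prop :=
  symmetric e /\ irreflexive e.

Definition adj_mx (R : realType) (n : nat) (e : rel 'I_n) : 'M[R]_n :=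
  \matrix_(i, j) (e i j)%:R.

Definition is_spectral_radius (R : realType) (n : nat) (e : rel 'I_n) (mu : R) : Prop :=
  eigenvalue (adj_mx R e) mu /\
  (forall a : R, eigenvalue (adj_mx R e) a -> a <= mu).

(* G contains the cycle C_r as a (not necessarily induced) subgraph:
   r distinct vertices v_0,...,v_{r-1} with v_i ~ v_{i+1 mod r}. *)
Definition contains_cycle (n : nat) (e : rel 'I_n) (r : nat) : Prop :=
  exists f : 'I_r -> 'I_n, injective f /\ forall i : 'I_r, e (f i) (f (ordS i)).

From HB Require Import structures.
From mathcomp Require Import all_boot all_order all_algebra.
From mathcomp Require Import all_reals.
From mathcomp Require Import zify ring lra.
From Stdlib Require Import Classical_Prop.
Set Implicit Arguments. Unset Strict Implicit. Unset Printing Implicit Defensive.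
Import Order.TTheory GRing.Theory Num.Theory.

(* Let x be an eigenvector for mu, y = |x| and u a vertex maximising y. Entrywise
   mu y <= A y; applying this twice at u gives
     mu (mu - (k - 1)) y_u <= sum_w y_w (codeg(u,w) - (k - 1) [u ~ w])
                           <= y_u sum_w (codeg(u,w) - (k - 1) [u ~ w])_+,
   and the threshold on mu makes the left side exceed k n y_u.  So it suffices to
   bound the last sum by k n when G has no C_{2k+1} and no C_{2k+2}.

   Let A = N(u); for w != u, codeg(u,w) is the number of neighbours of w in A.  A path
   of G - u on 2k or 2k+1 vertices with both ends in A closes through u into a
   forbidden cycle, and it may as well use only edges meeting A.  Without such paths
   inside a vertex set S, sum_{v in S} (d_A(v) - (k - 1) [v in A])_+ is at most
   sum_{v in S} (k - [v in A]), by induction on |S|: a vertex of small degree is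
   deleted; otherwise a longest path either has a Posa crossing, whose cycle spans a
   whole component on fewer than 2k vertices, where the bound is direct, or its ends
   have so many neighbours on it that it contains a forbidden path. *)

Lemma head_rev (T : Type) (x : T) s : head x (rev s) = last x s.
Proof. by case/lastP: s => [|s y] //=; rewrite rev_rcons last_rcons. Qed.

Lemma head_rot (T : Type) (x : T) s j : j < size s -> head x (rot j s) = nth x s j.
Proof. by move=> js; rewrite /rot (drop_nth x js). Qed.

Lemma last_take (T : Type) (x : T) s n : 0 < n <= size s -> last x (take n s) = nth x s n.-1.
Proof.
case/andP=> n_gt0 ns; rewrite -nth_last size_takel // nth_take //.
by rewrite prednK.
Qed.

Section TouchingPaths.

Variables (T : finType) (e : rel T) (A : pred T) (k : nat).
Hypotheses (e_sym : symmetric e) (e_irr : irreflexive e) (k_gt0 : 0 < k).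

Definition touchA : rel T := fun x y => e x y && (A x || A y).

Lemma touchA_sym : symmetric touchA.
Proof. by move=> x y; rewrite /touchA e_sym orbC. Qed.

Lemma touchA_irr : irreflexive touchA.
Proof. by move=> x; rewrite /touchA e_irr. Qed.

Definition Apath (S : {set T}) (s : seq T) :=
  [&& uniq s, all [in S] s & sorted touchA s].

Definition long_Apath (S : {set T}) := exists s x,
  [/\ Apath S s, 2 * k <= size s <= 2 * k + 1, A (head x s) & A (last x s)].

Lemma Apath_sub (S1 S2 : {set T}) s : S1 \subset S2 -> Apath S1 s -> Apath S2 s.
Proof.
move=> sS12 /and3P[u a p]; apply/and3P; split => //.
by apply: sub_all a => x; apply: (subsetP sS12).
Qed.

Lemma long_Apath_sub (S1 S2 : {set T}) : S1 \subset S2 -> long_Apath S1 -> long_Apath S2.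
Proof. by move=> sS12 [s [x [ps *]]]; exists s, x; split; first exact: Apath_sub ps. Qed.

Lemma Apath_take (S : {set T}) s n : Apath S s -> Apath S (take n s).
Proof.
case/and3P=> u a p; apply/and3P; split; first exact: take_uniq.
  by apply/allP => x /mem_take; apply: (allP a).
by case: s p {u a} => [|x s] //; case: n => [|n] //=; apply: take_path.
Qed.

Lemma Apath_rev (S : {set T}) s : Apath S s -> Apath S (rev s).
Proof.
case/and3P=> u a p; apply/and3P; split; rewrite ?rev_uniq ?all_rev //.
by rewrite rev_sorted (eq_sorted (e' := touchA)) // => x y; apply: touchA_sym.
Qed.

Lemma Apath_perm (S : {set T}) c d : Apath S c -> perm_eq c d -> sorted touchA d -> Apath S d.
Proof.
by case/and3P=> u a _ pcd sd; apply/and3P; rewrite -(perm_uniq pcd) -(perm_all _ pcd).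
Qed.

Lemma Apath_size (S : {set T}) s : Apath S s -> size s <= #|S|.
Proof.
case/and3P=> u a _; rewrite -(card_uniqP u); apply: subset_leq_card.
by apply/subsetP => x; apply: (allP a).
Qed.

(* The vertex after the first 2k ones is in A whenever the 2k-th one is not. *)
Lemma long_Apath_of_prefix (S : {set T}) s x :
  Apath S s -> A (head x s) -> 2 * k + 1 <= size s -> long_Apath S.
Proof.
move=> ps As ls.
have head_take n : 0 < n -> head x (take n s) = head x s.
  by case: s {ps As ls} => [|y s]; case: n.
case A2k: (A (nth x s (2 * k).-1)).
  exists (take (2 * k) s), x; split; rewrite ?head_take ?size_takel ?last_take //;
    by [apply: Apath_take | lia].
have: touchA (nth x s (2 * k).-1) (nth x s (2 * k)).
  case/and3P: ps => _ _ /(sortedP x)/(_ (2 * k).-1).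
  by rewrite prednK; [apply; lia | lia].
rewrite /touchA A2k /= => /andP[_ A2k1].
exists (take (2 * k + 1) s), x; split; rewrite ?head_take ?size_takel ?last_take //;
  by [apply: Apath_take | rewrite addn1 | lia].
Qed.

Definition longest_Apath (S : {set T}) s :=
  Apath S s /\ forall t, Apath S t -> size t <= size s.

Lemma exists_longest_Apath (S : {set T}) x : x \in S ->
  exists s, longest_Apath S s /\ s != [::].
Proof.
move=> xS.
suff longer d s : Apath S s -> s != [::] -> #|S| - size s <= d ->
    exists t, longest_Apath S t /\ t != [::].
  by apply: (longer #|S| [:: x]); rewrite ?leq_subr // /Apath /= xS.
elim: d s => [|d IH] s ps s0 hd.
  by exists s; split => //; split => // t /Apath_size; lia.
have [[t [pt st]] | nt] := classic (exists t, Apath S t /\ size s < size t).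
  by apply: (IH t pt); [case: t st {pt} | lia].
exists s; split => //; split => // t pt; rewrite leqNgt; apply/negP => st.
by apply: nt; exists t.
Qed.

Lemma longest_Apath_rev (S : {set T}) s : longest_Apath S s -> longest_Apath S (rev s).
Proof.
by case=> ps ls; split=> [|t /ls]; rewrite ?size_rev //; apply: Apath_rev.
Qed.

Lemma longest_Apath_head_closed (S : {set T}) s x w : longest_Apath S s -> s != [::] ->
  w \in S -> touchA (head x s) w -> w \in s.
Proof.
case: s => [|y s] [ps ls] // _ wS tyw; apply/negPn/negP => ws.
have: Apath S (w :: y :: s).
  case/and3P: ps => u a p; apply/and3P; split.
  - by rewrite cons_uniq ws u.
  - by rewrite /= wS.
  - by rewrite /= touchA_sym tyw.
by move/ls; rewrite /= ltnn.
Qed.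

Lemma longest_Apath_last_closed (S : {set T}) s x w : longest_Apath S s -> s != [::] ->
  w \in S -> touchA (last x s) w -> w \in s.
Proof.
move=> ls s0 wS; rewrite -head_rev -mem_rev; apply: longest_Apath_head_closed wS.
  exact: longest_Apath_rev.
by rewrite -size_eq0 size_rev size_eq0.
Qed.

Definition degS (S : {set T}) v := \sum_(w in S) (touchA v w : nat).
Definition degA (S : {set T}) v := \sum_(w in S) ((A w && e v w) : nat).

Lemma degS_le_count (S : {set T}) s v : uniq s ->
  (forall w, w \in S -> touchA v w -> w \in s) -> degS S v <= count (touchA v) s.
Proof.
move=> us cl; rewrite /degS -sum1_count [X in _ <= X]big_mkcond (big_uniq _ us).
rewrite [X in _ <= X]big_mkcond [X in X <= _]big_mkcond /=.
apply: leq_sum => w _; case wS: (w \in S); case tvw: (touchA v w) => //=.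
by rewrite (cl w wS tvw).
Qed.

(* [nth x (x :: p) i] is the predecessor of [nth x p i] on the path [x :: p]. *)
Definition crossing x p i := touchA x (nth x p i) && touchA (nth x (x :: p) i) (last x p).

(* Without a crossing index, the neighbours of the two ends occupy disjoint index sets. *)
Lemma count_ends_no_crossing x p : ~~ has (crossing x p) (iota 0 (size p)) ->
  count (touchA x) (x :: p) + count (fun w => touchA w (last x p)) (x :: p) <= size p.
Proof.
move=> nh.
have c1 : count (touchA x) (x :: p) = count (fun i => touchA x (nth x p i)) (iota 0 (size p)).
  by rewrite /= touchA_irr -(count_map (nth x p)) map_nth_iota0 // take_size.
have c2 : count (fun w => touchA w (last x p)) (x :: p) =
          count (fun i => touchA (nth x (x :: p) i) (last x p)) (iota 0 (size p)).
  rewrite -(count_map (nth x (x :: p)) (fun w => touchA w (last x p))).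
  rewrite map_nth_iota0; last by rewrite /=; lia.
  have xpE : x :: p = take (size p) (x :: p) ++ [:: last x p].
    by rewrite {2}(lastI x p) -cats1 take_size_cat ?size_belast // cats1 -lastI.
  by rewrite {1}xpE count_cat /= touchA_irr !addn0.
rewrite c1 c2 -count_predUI.
have -> : count (predI (fun i => touchA x (nth x p i))
    (fun i => touchA (nth x (x :: p) i) (last x p))) (iota 0 (size p)) = 0.
  by apply/eqP; rewrite -leqn0 leqNgt -has_count.
by rewrite addn0 (leq_trans (count_size _ _)) // size_iota.
Qed.

(* Posa rotation: reversing the tail from the crossing index closes a cycle. *)
Lemma crossing_cycle x p i : i < size p -> path touchA x p -> crossing x p i ->
  cycle touchA (x :: take i p ++ rev (drop i p)) /\
  perm_eq (x :: take i p ++ rev (drop i p)) (x :: p).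
Proof.
move=> ip pp /andP[h1 h2]; split; last first.
  by rewrite perm_cons -{3}(cat_take_drop i p) perm_cat2l; apply/permPl/perm_rev.
have lt : last x (take i p) = nth x (x :: p) i.
  rewrite (last_nth x) size_take ip.
  by case: i ip {h1 h2} => [|j] ip //=; rewrite nth_take.
have dr := drop_nth x ip.
move: pp; rewrite -{1}(cat_take_drop i p) cat_path => /andP[p1 p2].
rewrite /cycle rcons_path cat_path p1 /= lt.
move: p2; rewrite lt dr /= => /andP[_ p2].
have ll : last x p = last (nth x p i) (drop i.+1 p).
  by rewrite -{1}(cat_take_drop i p) last_cat dr.
rewrite last_cat -head_rev revK /= touchA_sym h1 andbT.
rewrite (lastI (nth x p i)) rev_rcons /= -ll h2 /= ll rev_path.
by rewrite (eq_path (e' := touchA)) // => a b; apply: touchA_sym.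
Qed.

Lemma Apath_rot (S : {set T}) c j : Apath S c -> cycle touchA c -> Apath S (rot j c).
Proof.
move=> pc cc; apply: (Apath_perm pc); first by rewrite perm_sym perm_rot.
have: cycle touchA (rot j c) by rewrite rot_cycle.
by case: (rot j c) => [|x d] //; rewrite (cycle_path x); apply: path_sorted.
Qed.

Definition closed_in (S Z : {set T}) := forall a b, a \in Z -> b \in S :\: Z -> ~~ touchA a b.

Lemma longest_cycle_closed (S : {set T}) c : longest_Apath S c -> cycle touchA c ->
  closed_in S [set w | w \in c].
Proof.
move=> [pc lc] cc a b; rewrite !inE => ac /andP[bc bS]; apply/negP => tab.
have /and3P[u al so] := Apath_rot (index a c) pc cc.
have ac' : index a c < size c by rewrite index_mem.
have: Apath S (b :: rot (index a c) c).
  apply/and3P; split; rewrite /= ?u ?al ?bS ?mem_rot ?bc //.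
  have: head b (rot (index a c) c) = a by rewrite head_rot // nth_index.
  by move: so; case: (rot _ c) => [|y q] //= sq ya; subst y; rewrite sq andbT touchA_sym.
by move/lc; rewrite /= size_rot ltnn.
Qed.

Lemma cycle_has_A c : cycle touchA c -> 2 <= size c -> has A c.
Proof.
case: c => [|y [|z q]] //= /andP[/andP[_]].
by case/orP => ->; rewrite ?orbT.
Qed.

Lemma long_Apath_of_long_cycle (S : {set T}) c :
  Apath S c -> cycle touchA c -> 2 * k + 1 <= size c -> long_Apath S.
Proof.
move=> pc cc lc.
have /hasP[y yc Ay] : has A c by apply: cycle_has_A => //; lia.
apply: (long_Apath_of_prefix (x := y) (Apath_rot (index y c) pc cc)).
  by rewrite head_rot ?index_mem // nth_index.
by rewrite size_rot.
Qed.

(* More than half of the vertices of a 2k-cycle in A forces two consecutive ones in A. *)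
Lemma long_Apath_of_dense_cycle (S : {set T}) c :
  Apath S c -> cycle touchA c -> size c = 2 * k -> k < count A c -> long_Apath S.
Proof.
move=> pc cc sc kc.
have [x _] : exists x, x \in c.
  by case: c sc {pc cc kc} => [|x c] /= sc; [lia | exists x; rewrite mem_head].
pose a1 j := A (nth x c j); pose a2 j := A (nth x (rot 1 c) j).
have cA1 : count a1 (iota 0 (size c)) = count A c.
  by rewrite -(count_map (nth x c) A) map_nth_iota0 // take_size.
have cA2 : count a2 (iota 0 (size c)) = count A c.
  rewrite -(count_map (nth x (rot 1 c)) A) -(size_rot 1) map_nth_iota0 //.
  by rewrite take_size; apply/permP; rewrite perm_rot.
have: 0 < count (predI a1 a2) (iota 0 (size c)).
  have := count_predUI a1 a2 (iota 0 (size c)).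
  have := count_size (predU a1 a2) (iota 0 (size c)).
  rewrite size_iota cA1 cA2; lia.
rewrite -has_count => /hasP[j]; rewrite mem_iota add0n => /andP[_ jc] /andP[Aj Aj1].
exists (rot j (rot 1 c)), x; split.
- by apply: Apath_rot; [apply: Apath_rot | rewrite rot_cycle].
- by rewrite !size_rot sc; lia.
- by rewrite head_rot ?size_rot.
rewrite rot_rot; move: (head_rot x jc) Aj; rewrite /a1.
by case: (rot j c) => [|y q] <- //; rewrite rot1_cons last_rcons.
Qed.

Section Irreducible.

Variable S : {set T}.
Hypothesis no_long : ~ long_Apath S.
Hypothesis deg_gt : forall v, v \in S -> k < degS S v + A v.

Lemma closed_cycle_small c : Apath S c -> cycle touchA c ->
  closed_in S [set w | w \in c] -> size c < 2 * k.
Proof.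
move=> pc cc clc.
case: (ltngtP (size c) (2 * k)) => // [lc | ec].
  by case: no_long; apply: (long_Apath_of_long_cycle pc cc); rewrite addn1.
have [dense | sparse] := ltnP k (count A c).
  by case: no_long; apply: (long_Apath_of_dense_cycle pc cc).
have /hasP[b bc /= Nb] : has (predC A) c.
  by rewrite has_count -(leq_add2l (count A c)) count_predC; lia.
have /and3P[uc /allP cS _] := pc.
have clb w : w \in S -> touchA b w -> w \in c.
  move=> wS tbw; apply/negPn/negP => wc.
  by move: (clc b w); rewrite !inE bc wc wS => /(_ isT isT); rewrite tbw.
have db := degS_le_count uc clb.
have cb : count (touchA b) c <= count A c.
  by apply: sub_count => w; rewrite /touchA (negbTE Nb) => /andP[].
by have := deg_gt (cS b bc); rewrite (negbTE Nb); lia.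
Qed.

Lemma long_Apath_of_no_crossing x p : longest_Apath S (x :: p) ->
  ~~ has (crossing x p) (iota 0 (size p)) -> long_Apath S.
Proof.
move=> lp nh; have [pp _] := lp.
have /and3P[up /allP pS _] := pp.
have dx : degS S x <= count (touchA x) (x :: p).
  by apply: degS_le_count => // w; apply: (longest_Apath_head_closed (x := x) lp).
have dl : degS S (last x p) <= count (fun w => touchA w (last x p)) (x :: p).
  rewrite (eq_count (a2 := touchA (last x p))) => [|w]; last exact: touchA_sym.
  by apply: degS_le_count => // w; apply: (longest_Apath_last_closed (x := x) lp).
have len : 2 * k + 2 <= size p + A x + A (last x p).
  move: (deg_gt (pS x (mem_head x p))) (deg_gt (pS _ (mem_last x p))).
  move: (count_ends_no_crossing nh) dx dl; set cx := count _ _; set cl := count _ _.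
  by case: (A x); case: (A _) => /=; lia.
have Al1 := leq_b1 (A (last x p)).
case Ax: (A x) in len.
  by apply: (long_Apath_of_prefix (x := x) pp) => //=; lia.
case Al: (A (last x p)) in len Al1.
  apply: (long_Apath_of_prefix (x := x) (Apath_rev pp)); first by rewrite head_rev.
  by rewrite size_rev /=; lia.
case: p {nh dx dl Al1 Al} lp pp up pS len => [|y p] lp pp up pS /= len; first lia.
have: touchA x y by case/and3P: pp => _ _ /= /andP[].
rewrite /touchA Ax /= => /andP[_ Ay].
apply: (long_Apath_of_prefix (s := y :: p) (x := y)) => //; last by rewrite /=; lia.
by case/and3P: pp => /= /andP[_ uy] /andP[_ ay] /andP[_ py]; apply/and3P.
Qed.

Lemma exists_closed_small_set x : x \in S ->
  exists Z : {set T}, [/\ Z \subset S, Z != set0, #|Z| < 2 * k & closed_in S Z].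
Proof.
move=> xS; have [[|x0 p] [lp _] //] := exists_longest_Apath xS.
have [/hasP[i] | nh] := boolP (has (crossing x0 p) (iota 0 (size p))); last first.
  by case: no_long; apply: long_Apath_of_no_crossing nh.
rewrite mem_iota add0n => /andP[_ ip] cr.
have [pp lpp] := lp; have /and3P[_ /allP pS ppath] := pp.
have [cc pc] := crossing_cycle ip ppath cr.
set c := x0 :: _ in cc pc.
have lc : longest_Apath S c.
  split => [|t /lpp]; last by rewrite (perm_size pc).
  apply: (Apath_perm pp); first by rewrite perm_sym.
  by move: cc; rewrite /c (cycle_path x0); apply: path_sorted.
exists [set w | w \in c]; split.
- by apply/subsetP => w; rewrite inE (perm_mem pc); apply: pS.
- by apply/set0Pn; exists x0; rewrite inE mem_head.
- have -> : #|[set w | w \in c]| = #|c| by apply: eq_card => w; rewrite inE.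
  exact: leq_ltn_trans (card_size c) (closed_cycle_small lc.1 cc (longest_cycle_closed lc cc)).
- exact: longest_cycle_closed.
Qed.

End Irreducible.


Definition excess (S : {set T}) := \sum_(v in S) (degA S v - (k - 1) * A v).
Definition budget (S : {set T}) := \sum_(v in S) (k - A v).

Lemma excess_delete (S : {set T}) v : v \in S -> degS S v + A v <= k ->
  excess S <= excess (S :\ v) + (k - A v).
Proof.
move=> vS dv; rewrite /excess (big_setD1 v vS) /=.
have dAv : degA S v <= degS S v.
  apply: leq_sum => w _; rewrite /touchA.
  by case: (A w); case: (e v w); rewrite ?orbT.
have back : \sum_(w in S :\ v) ((A v && e w v) : nat) <= A v * degS S v.
  case Av: (A v) => /=; last by rewrite big1.
  rewrite mul1n /degS (big_setD1 v vS) /= [X in _ <= X]addnC.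
  apply: leq_trans (leq_addr _ _); apply: leq_sum => w _.
  by rewrite /touchA Av orTb andbT e_sym.
have rest : \sum_(w in S :\ v) (degA S w - (k - 1) * A w) <=
    \sum_(w in S :\ v) (degA (S :\ v) w - (k - 1) * A w) +
    \sum_(w in S :\ v) ((A v && e w v) : nat).
  rewrite -big_split /=; apply: leq_sum => w _.
  rewrite /degA (big_setD1 v vS) /=; lia.
by move: dv back rest; case: (A v) => /= dv back rest; lia.
Qed.

Lemma excess_budget_split (S Z : {set T}) : Z \subset S -> closed_in S Z ->
  excess S = excess Z + excess (S :\: Z) /\ budget S = budget Z + budget (S :\: Z).
Proof.
move=> ZS cl; have SZ : S :&: Z = Z by apply/setIidPr.
split; last by rewrite /budget (big_setID Z) SZ.
rewrite /excess (big_setID Z) SZ; congr (_ + _); apply: eq_bigr => v vZ; congr (_ - _).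
- rewrite /degA (big_setID Z) SZ /= [X in _ + X]big1 ?addn0 // => w wSZ.
  have := cl v w vZ wSZ; rewrite /touchA.
  by case: (A w); case: (e v w); rewrite ?orbT.
- rewrite /degA (big_setID Z) SZ /= big1 ?add0n // => w wZ.
  have := cl w v wZ vZ; rewrite /touchA e_sym.
  by case: (A w); case: (e v w); rewrite ?orbT.
Qed.

(* Double counting the A-B edges: the summand of a vertex outside A is charged to its A-neighbours. *)
Lemma excess_by_A (Z : {set T}) : excess Z =
  \sum_(w in Z | A w) ((degA Z w - (k - 1)) + \sum_(v in Z | ~~ A v) (e w v : nat)).
Proof.
rewrite big_split /= /excess (bigID A) /=; congr (_ + _).
  by apply: eq_bigr => v /andP[_ ->]; rewrite muln1.
under eq_bigr => v /andP[_ /negbTE ->] do rewrite muln0 subn0.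
rewrite /degA exchange_big /= (bigID A) /= [X in _ + X]big1 ?addn0.
  by apply: eq_bigr => w /andP[_ ->]; apply: eq_bigr => v _; rewrite e_sym.
by move=> w /andP[_ /negbTE Aw]; rewrite big1 // => v _; rewrite Aw.
Qed.

Lemma excess_le_budget_small (Z : {set T}) : #|Z| < 2 * k -> excess Z <= budget Z.
Proof.
move=> cZ; set a := \sum_(v in Z) (A v : nat).
have dAa v : degA Z v <= a.
  by apply: leq_sum => w _; case: (A w) => //=; apply: leq_b1.
have [ak | ka] := leqP a (k - 1).
  apply: leq_sum => v _; have := dAa v.
  by case: (A v) => /=; lia.
set nB := \sum_(v in Z | ~~ A v) 1.
have anB : a + nB = #|Z|.
  rewrite -sum1_card (bigID A) /=; congr (_ + _).
  rewrite /a big_mkcond [RHS]big_mkcond; apply: eq_bigr => v _.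
  by case: (v \in Z); case: (A v).
have budgetA : \sum_(w in Z | A w) (k - 1) <= budget Z.
  rewrite /budget [X in _ <= X](bigID A) /=; apply: leq_trans (leq_addr _ _).
  by apply: leq_sum => v /andP[_ ->].
rewrite excess_by_A; apply: leq_trans budgetA; apply: leq_sum => w /andP[wZ Aw].
have dB : \sum_(v in Z | ~~ A v) (e w v : nat) <= nB.
  by apply: leq_sum => v _; case: (e w v).
have deg : degA Z w + \sum_(v in Z | ~~ A v) (e w v : nat) <= #|Z| - 1.
  have -> : degA Z w + \sum_(v in Z | ~~ A v) (e w v : nat) = \sum_(v in Z) (e w v : nat).
    rewrite [RHS](bigID A) /=; congr (_ + _).
    rewrite /degA big_mkcond [RHS]big_mkcond; apply: eq_bigr => v _.
    by case: (v \in Z); case: (A v).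
  rewrite (big_setD1 w wZ) /= e_irr add0n (cardsD1 w Z) wZ add1n subn1 /=.
  by rewrite -sum1_card; apply: leq_sum => v _; case: (e w v).
lia.
Qed.

Lemma excess_le_budget (S : {set T}) : ~ long_Apath S -> excess S <= budget S.
Proof.
move: {2}#|S| (leqnn #|S|) => m; elim: m S => [|m IH] S cS nl.
  by move: cS; rewrite leqn0 cards_eq0 => /eqP ->; rewrite /excess big_set0.
have IHsub (Z : {set T}) : Z \subset S -> Z != set0 -> excess (S :\: Z) <= budget (S :\: Z).
  move=> ZS Z0; apply: IH; last by apply: contra_not nl; apply: long_Apath_sub; apply: subsetDl.
  rewrite cardsD (setIidPr ZS) -ltnS; apply: leq_trans cS.
  by move: (card_gt0 Z) (subset_leq_card ZS); rewrite Z0; lia.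
have [/exists_inP[v vS dv] | small_deg] := boolP [exists v in S, degS S v + A v <= k].
  apply: leq_trans (excess_delete vS dv) _.
  rewrite /budget (big_setD1 v vS) addnC leq_add2l.
  apply: IHsub; first by rewrite sub1set.
  by apply/set0Pn; exists v; rewrite set11.
have deg_gt v : v \in S -> k < degS S v + A v.
  by move=> vS; rewrite ltnNge; apply: contraNN small_deg => dv; apply/exists_inP; exists v.
have [-> | [x xS]] := set_0Vmem S; first by rewrite /excess /budget !big_set0.
have [Z [ZS Z0 cZ clZ]] := exists_closed_small_set nl deg_gt xS.
have [-> ->] := excess_budget_split ZS clZ.
by apply: leq_add; [apply: excess_le_budget_small | apply: IHsub].
Qed.

End TouchingPaths.

Definition codeg n (e : rel 'I_n) (u w : 'I_n) : nat := \sum_i (e i u && e w i).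

Lemma contains_cycle_of_Apath n (e : rel 'I_n) (u x : 'I_n) (s : seq 'I_n) :
  symmetric e -> s != [::] -> Apath e (e u) (setT :\ u) s ->
  e u (head x s) -> e u (last x s) -> contains_cycle e (size s).+1.
Proof.
move=> e_sym; case: s => [|y p] // _ /and3P[us as_ ps] /= ey el.
have un : uniq (u :: y :: p).
  rewrite cons_uniq us andbT; apply/negP => uyp.
  by move/allP: as_ => /(_ u uyp); rewrite !inE eqxx.
exists (fun i : 'I_(size (y :: p)).+1 => nth u (u :: y :: p) i); split.
  by move=> i j /eqP; rewrite nth_uniq // => /eqP; apply: val_inj.
have pe : path e u (y :: p).
  by rewrite /= ey; apply: sub_path ps => a b /andP[].
move=> i; rewrite /ordS /=.
have [ip | ip] := ltnP i (size p).+1.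
  by rewrite modn_small ?ltnS //; move/(pathP u): pe; apply.
have -> : nat_of_ord i = (size p).+1 by apply/eqP; rewrite eqn_leq ip andbT -ltnS.
by rewrite modnn /= -/(nth u (y :: p) (size p)) -last_nth e_sym.
Qed.

(* Subtraction is truncated: the summands are the positive parts. *)
Lemma codeg_excess_bound n (e : rel 'I_n) (u : 'I_n) k :
  symmetric e -> irreflexive e -> 0 < k ->
  ~ (contains_cycle e (2 * k + 1) \/ contains_cycle e (2 * k + 2)) ->
  \sum_w (codeg e u w - (k - 1) * e u w) <= k * n.
Proof.
move=> e_sym e_irr k_gt0 no_cycle; set S := setT :\ u.
have no_long : ~ long_Apath e (e u) k S.
  move=> [s [x [ps /andP[s1 s2] hA lA]]]; apply: no_cycle.
  have s0 : s != [::] by case: s s1 {s2 ps hA lA} => //=; lia.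
  have cyc := contains_cycle_of_Apath e_sym s0 ps hA lA.
  have [s3 | s3] := ltnP (size s) (2 * k + 1).
    by left; rewrite (_ : 2 * k + 1 = (size s).+1) //; lia.
  by right; rewrite (_ : 2 * k + 2 = (size s).+1) //; lia.
have inS w : (w \in S) = (w != u) by rewrite !inE andbT.
rewrite (bigD1 u) //= e_irr muln0 subn0.
have codeg_u : codeg e u u = \sum_(i in S) (e u i : nat).
  rewrite /codeg (bigD1 u) //= e_irr add0n; apply: eq_big => i; first by rewrite inS.
  by rewrite e_sym andbb.
have codeg_S : \sum_(w | w != u) (codeg e u w - (k - 1) * e u w) = excess e (e u) k S.
  apply: eq_big => [w | w wu]; first by rewrite inS.
  congr (_ - _); rewrite /codeg /degA (bigD1 u) //= e_irr add0n.
  by apply: eq_big => i; [rewrite inS | rewrite e_sym].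
rewrite codeg_u codeg_S.
apply: leq_trans (leq_add (leqnn _) (excess_le_budget e_sym e_irr k_gt0 no_long)) _.
rewrite /budget -big_split /=.
rewrite (eq_bigr (fun=> k)) => [|i _]; last by rewrite subnKC // (leq_trans (leq_b1 _)).
rewrite sum_nat_const mulnC leq_mul2l (leq_trans (subset_leq_card (subsetT S))) ?orbT //.
by rewrite cardsT card_ord.
Qed.

Local Open Scope ring_scope.

(* (K - 1)/2 + s exceeds the positive root of x (x - (K - 1)) = K N. *)
Lemma spectral_threshold (R : realFieldType) (K N mu s : R) : 1 <= K -> 0 <= N -> 0 <= s ->
  s ^+ 2 = K * N + (K + 1) ^+ 2 / 4 -> (K - 1) / 2 + s < mu ->
  K - 1 <= mu /\ K * N < mu * (mu - (K - 1)).
Proof.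
move=> K1 N0 s0 sE mu_gt; have sK : (K + 1) / 2 <= s by nra.
split; first lra.
have h1 : 0 < mu - (K - 1) / 2 - s by lra.
have h2 : 0 < mu - (K - 1) / 2 + s by lra.
nra.
Qed.

Lemma eigenvector_abs_le (R : realType) n (e : rel 'I_n) (mu : R) (v : 'rV[R]_n) :
  0 <= mu -> v *m adj_mx R e = mu *: v ->
  forall j, mu * `|v 0 j| <= \sum_i `|v 0 i| * (e i j)%:R.
Proof.
move=> mu_ge0 vA j; rewrite -(ger0_norm mu_ge0) -normrM.
have -> : mu * v 0 j = \sum_i v 0 i * (e i j)%:R.
  have := congr1 (fun M : 'rV[R]_n => M 0 j) vA; rewrite !mxE => <-.
  by apply: eq_bigr => i _; rewrite mxE.
apply: le_trans (ler_norm_sum _ _ _) _; apply: ler_sum => i _.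
by rewrite normrM normr_nat.
Qed.

(* Apply the eigen-inequality twice at the maximising vertex u. *)
Lemma spectral_codeg_bound (R : realType) n (e : rel 'I_n) (y : 'I_n -> R) (mu : R) (c : nat) (u : 'I_n) :
  symmetric e -> (forall i, 0 <= y i) -> (forall i, y i <= y u) -> 0 < y u -> c%:R <= mu ->
  (forall j, mu * y j <= \sum_i y i * (e i j)%:R) ->
  mu * (mu - c%:R) <= (\sum_w (codeg e u w - c * e u w)%N)%:R.
Proof.
move=> e_sym y_ge0 y_max yu_gt0 c_le sub.
have twice : mu * (mu - c%:R) * y u <=
    \sum_i (e i u)%:R * (\sum_w y w * (e w i)%:R - c%:R * y i).
  have -> : mu * (mu - c%:R) * y u = (mu - c%:R) * (mu * y u) by ring.
  apply: le_trans (ler_wpM2l _ (sub u)) _; first by rewrite subr_ge0.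
  rewrite mulr_sumr; apply: ler_sum => i _.
  have -> : (mu - c%:R) * (y i * (e i u)%:R) = (e i u)%:R * (mu * y i - c%:R * y i) by ring.
  by apply: ler_wpM2l; [apply: ler0n | rewrite lerD2r sub].
have regroup : \sum_i (e i u)%:R * (\sum_w y w * (e w i)%:R - c%:R * y i) =
    \sum_w y w * ((codeg e u w)%:R - c%:R * (e u w)%:R) :> R.
  transitivity (\sum_i \sum_w (e i u)%:R * (y w * (e w i)%:R) -
                \sum_i c%:R * ((e i u)%:R * y i) : R).
    by rewrite -sumrB; apply: eq_bigr => i _; rewrite mulrBr mulr_sumr mulrCA.
  rewrite exchange_big /= -sumrB; apply: eq_bigr => w _.
  rewrite mulrBr /codeg natr_sum mulr_sumr (e_sym w u); congr (_ - _); last by ring.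
  by apply: eq_bigr => i _; rewrite -mulnb natrM mulrCA.
have termwise w : y w * ((codeg e u w)%:R - c%:R * (e u w)%:R) <=
    y u * ((codeg e u w - c * e u w)%N)%:R.
  rewrite -natrM; have [le | lt] := leqP (c * e u w) (codeg e u w).
    by rewrite -natrB //; apply: ler_wpM2r; [apply: ler0n | apply: y_max].
  apply: (@le_trans _ _ 0); last by apply: mulr_ge0; [apply: ltW | apply: ler0n].
  by apply: mulr_ge0_le0 => //; rewrite subr_le0 ler_nat ltnW.
rewrite -(ler_pM2r yu_gt0) [X in _ <= X]mulrC; apply: le_trans twice _.
rewrite regroup natr_sum mulr_sumr; exact: ler_sum.
Qed.

Theorem theorem3 (R : realType) (k n : nat) (e : rel 'I_n) (mu : R) :
  (1 <= k)%N ->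
  simple_graph e ->
  is_spectral_radius e mu ->
  mu > (k%:R - 1) / 2 + Num.sqrt (k%:R * n%:R + (k%:R + 1) ^+ 2 / 4) ->
  contains_cycle e (2 * k + 1) \/ contains_cycle e (2 * k + 2).
Proof.
move=> k_gt0 [e_sym e_irr] [/eigenvalueP[v vA v_neq0] _] mu_gt.
set D := k%:R * n%:R + _ in mu_gt; have D_ge0 : 0 <= D.
  by apply: addr_ge0; [apply: mulr_ge0 | apply: divr_ge0; [apply: sqr_ge0 |]].
have k_ge1 : 1 <= k%:R :> R by rewrite ler1n.
have [c_le key] := spectral_threshold k_ge1 (ler0n R n) (sqrtr_ge0 D) (sqr_sqrtr D_ge0) mu_gt.
have k1E : k%:R - 1 = (k - 1)%:R :> R by rewrite natrB.
rewrite k1E in c_le key; have mu_ge0 : 0 <= mu := le_trans (ler0n _ _) c_le.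
apply: NNPP => no_cycle.
have /existsP[i0 vi0] : [exists i, v 0 i != 0].
  apply: contraNT v_neq0 => /existsPn v0; apply/eqP/rowP => i.
  by rewrite mxE; apply/eqP/negPn/v0.
have [u _ u_max] := @arg_maxP _ _ _ i0 xpredT (fun i => `|v 0 i|) isT.
have yu_gt0 : 0 < `|v 0 u| by apply: lt_le_trans (u_max i0 isT); rewrite normr_gt0.
have := spectral_codeg_bound e_sym (fun i => normr_ge0 (v 0 i)) (fun i => u_max i isT) yu_gt0 c_le
  (eigenvector_abs_le mu_ge0 vA).
rewrite leNgt => /negP; apply; apply: le_lt_trans key.
by rewrite -natrM ler_nat codeg_excess_bound.
Qed.
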